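(* For all $x,y\in\mathbb{C}$ and all integers $n\ge0$, \[ \sum_{k=0}^n x^k\big(yL_{2k}(y)+(x(y^2+2)-2)F_{2k+2}(y)\big)=x^{n+1}(y^2+2)F_{2n+2}(y) \] and \[ \sum_{k=0}^n x^k\big(y(y^2+4)F_{2k}(y)+(x(y^2+2)-2)L_{2k+2}(y)\big)=(y^2+2)\big(x^{n+1}L_{2n+2}(y)-2\big). \]
   Context: The Fibonacci polynomials $F_n(y)$ and Lucas polynomials $L_n(y)$ are defined by $F_0(y)=0$, $F_1(y)=1$, $L_0(y)=2$, $L_1(y)=y$ and $W_n(y)=yW_{n-1}(y)+W_{n-2}(y)$ for $n\ge2$ (for $W=F$ and $W=L$). *)

From HB Require Import structures.
From mathcomp Require Import all_boot all_order all_algebra.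
From mathcomp Require Import complex.
From mathcomp Require Import Rstruct.
Set Implicit Arguments. Unset Strict Implicit. Unset Printing Implicit Defensive.
Import Order.TTheory GRing.Theory Num.Theory.
Local Open Scope ring_scope.

Notation CC := (complex Rdefinitions.R).

Fixpoint Wpair {K : comNzRingType} (a b y : K) (n : nat) : K * K :=
  match n with
  | 0 => (a, b)
  | n'.+1 => let p := Wpair a b y n' in (p.2, y * p.2 + p.1)
  end.

Definition fibp {K : comNzRingType} (n : nat) (y : K) : K := (Wpair 0 1 y n).1.
Definition lucp {K : comNzRingType} (n : nat) (y : K) : K := (Wpair 2 y y n).1.

From HB Require Import structures.
From mathcomp Require Import all_boot all_order all_algebra.
From mathcomp Require Import complex.
From mathcomp Require Import Rstruct.
From mathcomp Require Import ring.
Import GRing.Theory.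
Local Open Scope ring_scope.

(* Every solution of W_{m+2} = y W_{m+1} + W_m satisfies
   2 W_{m+2} = (y^2 + 2) W_m + y (2 W_{m+1} - y W_m), and the "conjugate"
   2 W_{m+1} - y W_m is L_m for W = F and (y^2 + 4) F_m for W = L.  Hence the
   k-th summand of either sum is g (k+1) - g k with g k = (y^2 + 2) x^k W_{2k},
   and both sums telescope. *)

Section SecondOrderRecurrence.

Variables (K : comNzRingType) (a b y : K).

Lemma Wpair_recS m :
  (Wpair a b y m.+2).1 = y * (Wpair a b y m.+1).1 + (Wpair a b y m).1.
Proof. by []. Qed.

Lemma Wpair_double_step m :
  2 * (Wpair a b y m.+2).1
  = (y ^+ 2 + 2) * (Wpair a b y m).1
    + y * (2 * (Wpair a b y m.+1).1 - y * (Wpair a b y m).1).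
Proof. rewrite Wpair_recS; ring. Qed.

End SecondOrderRecurrence.

Section FibonacciLucas.

Variables (K : comNzRingType) (y : K).

Lemma fibpSS m : fibp m.+2 y = y * fibp m.+1 y + fibp m y.
Proof. exact: Wpair_recS. Qed.

(* [fibp m.+1 y - y * fibp m y] plays the role of F_{m-1}, which is 1 at m = 0. *)
Lemma Wpair_fibp (a b : K) m :
  (Wpair a b y m).1 = b * fibp m y + a * (fibp m.+1 y - y * fibp m y).
Proof.
pose W m := b * fibp m y + a * (fibp m.+1 y - y * fibp m y).
suff -> : Wpair a b y m = (W m, W m.+1) by [].
elim: m => [|m IHm]; first by rewrite /W /fibp /=; congr pair; ring.
by rewrite [Wpair _ _ _ m.+1]/= IHm /W !fibpSS /=; congr pair; ring.
Qed.

Lemma lucp0 : lucp 0 y = 2.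
Proof. by []. Qed.

Lemma lucp_fibp m : lucp m y = 2 * fibp m.+1 y - y * fibp m y.
Proof. rewrite [LHS]Wpair_fibp; ring. Qed.

Lemma fibp_lucp m : (y ^+ 2 + 4) * fibp m y = 2 * lucp m.+1 y - y * lucp m y.
Proof. rewrite !lucp_fibp fibpSS; ring. Qed.

Lemma fibp_double_step m :
  2 * fibp m.+2 y = (y ^+ 2 + 2) * fibp m y + y * lucp m y.
Proof. by rewrite [LHS]Wpair_double_step -lucp_fibp. Qed.

Lemma lucp_double_step m :
  2 * lucp m.+2 y = (y ^+ 2 + 2) * lucp m y + y * (y ^+ 2 + 4) * fibp m y.
Proof. by rewrite [LHS]Wpair_double_step -mulrA fibp_lucp. Qed.

End FibonacciLucas.

Lemma sum_weighted_telescope (K : comNzRingType) (x c : K) (u v : nat -> K) n :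
  (forall k, 2 * u k.+1 = c * u k + v k) ->
  \sum_(0 <= k < n.+1) x ^+ k * (v k + (x * c - 2) * u k.+1)
  = c * (x ^+ n.+1 * u n.+1 - u 0%N).
Proof.
move=> uS; rewrite (telescope_sumr_eq (fun k => c * (x ^+ k * u k))) //.
  by rewrite expr0 mul1r mulrBr.
move=> k _; have -> : v k = 2 * u k.+1 - c * u k by rewrite uS; ring.
rewrite exprS; ring.
Qed.

Theorem corollary6 (x y : CC) (n : nat) :
  \sum_(0 <= k < n.+1)
     x ^+ k * (y * lucp (2 * k) y + (x * (y ^+ 2 + 2) - 2) * fibp (2 * k + 2) y)
   = x ^+ n.+1 * (y ^+ 2 + 2) * fibp (2 * n + 2) y
  /\
  \sum_(0 <= k < n.+1)
     x ^+ k * (y * (y ^+ 2 + 4) * fibp (2 * k) y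
               + (x * (y ^+ 2 + 2) - 2) * lucp (2 * k + 2) y)
   = (y ^+ 2 + 2) * (x ^+ n.+1 * lucp (2 * n + 2) y - 2).
Proof.
have double_index k : (2 * k + 2 = 2 * k.+1)%N by rewrite mulnSr.
under eq_bigr do rewrite double_index.
under [in X in _ /\ X]eq_bigr do rewrite double_index.
rewrite !double_index; split.
- rewrite (sum_weighted_telescope _ _ _ (fun k => fibp (2 * k) y)
            (fun k => y * lucp (2 * k) y)) => [|k].
    by rewrite muln0 subr0 mulrCA mulrA.
  by rewrite mulnSr addn2 fibp_double_step.
- rewrite (sum_weighted_telescope _ _ _ (fun k => lucp (2 * k) y)
            (fun k => y * (y ^+ 2 + 4) * fibp (2 * k) y)) => [|k].
    by rewrite muln0 lucp0.
  by rewrite mulnSr addn2 lucp_double_step.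
Qed.
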